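(* Let $0\le t\le r\le n/2$ be integers, and let $A_y$ be the $(r-t+1)\times(r-t+1)$ tridiagonal matrix with zero diagonal, superdiagonal entries $\beta_{t+1},\dots,\beta_r$ and subdiagonal entries $\gamma_t,\dots,\gamma_{r-1}$, where $\beta_i=n-i+1$ and $\gamma_i=\frac{(i-t+1)(n-t-i)}{n-i}$. Then $A_y$ has $r-t+1$ simple eigenvalues, and its set of eigenvalues is $\{2x-(n-2t) : x\in\mathcal{R}(n-2t,\,r-t+1)\}$.
   Context: The Krawtchouk polynomial on $\{0,1\}^m$ of degree $k$ is $K^{(m)}_k(x)=\sum_{\ell=0}^k(-1)^\ell\binom{x}{\ell}\binom{m-x}{k-\ell}$ (a polynomial in $x$); $\mathcal{R}(m,k)$ denotes its set of roots, which are real and distinct. *)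

From HB Require Import structures.
From mathcomp Require Import all_boot all_order all_algebra.
From mathcomp Require Import reals.
Set Implicit Arguments. Unset Strict Implicit. Unset Printing Implicit Defensive.
Import Order.TTheory GRing.Theory Num.Theory.
Local Open Scope ring_scope.

Definition pbinom (R : realType) (p : {poly R}) (l : nat) : {poly R} :=
  (l`!%:R)^-1 *: \prod_(j < l) (p - (j%:R)%:P).

Definition krawtchouk (R : realType) (m k : nat) : {poly R} :=
  \sum_(l < k.+1) ((-1) ^+ l) *: (pbinom 'X l * pbinom ((m%:R)%:P - 'X) (k - l)).

Definition kbeta (R : realType) (n i : nat) : R := n%:R - i%:R + 1.
Definition kgamma (R : realType) (n t i : nat) : R :=
  ((i%:R - t%:R + 1) * (n%:R - t%:R - i%:R)) / (n%:R - i%:R).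

Definition Ay (R : realType) (n r t : nat) : 'M[R]_((r - t).+1) :=
  \matrix_(i, j)
    (if (j : nat) == i.+1 then kbeta R n (t + i).+1
     else if (i : nat) == j.+1 then kgamma R n t (t + j)
     else 0).

(* Ay is tridiagonal with zero diagonal, and the products of its opposite
   off-diagonal entries are c_j = j (m - j + 1) with m = n - 2t.  Let P_k be the
   monic polynomials with P_(k+2) = X P_(k+1) - c_(k+1) P_k.  Then:
   - P_k(2x - m) = k! (-1)^k K_k(x), by the three-term recurrence of the
     Krawtchouk polynomials;
   - since every c_j is positive, the roots of P_k and P_(k+1) strictly
     interlace, so P_(N+1) (N = r - t) has N+1 simple real roots;
   - every root a of P_(N+1) is an eigenvalue of Ay, with left eigenvector
     (P_j(a) / (g_0 ... g_(j-1)))_j, g the subdiagonal.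
   Hence char_poly Ay and P_(N+1), monic of degree N+1 with the same N+1
   distinct roots, are equal. *)

From mathcomp Require Import all_boot all_order all_algebra.
From mathcomp Require Import reals polyrcf.
From mathcomp Require Import zify ring lra.
Import Order.TTheory GRing.Theory Num.Theory.
Set Implicit Arguments. Unset Strict Implicit. Unset Printing Implicit Defensive.
Local Open Scope ring_scope.

Section OrthPoly.
Variables (R : comNzRingType) (c : nat -> R).

Fixpoint orthpoly (k : nat) : {poly R} :=
  if k is k'.+1 then
    if k' is k''.+1 then 'X * orthpoly k' - (c k')%:P * orthpoly k'' else 'X
  else 1.

Arguments orthpoly : simpl never.

Lemma orthpoly0 : orthpoly 0 = 1. Proof. by []. Qed.

Lemma orthpoly1 : orthpoly 1 = 'X. Proof. by []. Qed.

Lemma orthpolySS k :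
  orthpoly k.+2 = 'X * orthpoly k.+1 - (c k.+1)%:P * orthpoly k.
Proof. by []. Qed.

Lemma horner_orthpolySS k x :
  (orthpoly k.+2).[x] = x * (orthpoly k.+1).[x] - c k.+1 * (orthpoly k).[x].
Proof. by rewrite orthpolySS hornerD hornerN hornerM hornerX hornerCM. Qed.

Lemma horner_orthpolySS_root k x :
  root (orthpoly k.+1) x -> (orthpoly k.+2).[x] = - (c k.+1 * (orthpoly k).[x]).
Proof. by move/rootP=> Px; rewrite horner_orthpolySS Px mulr0 sub0r. Qed.

Lemma orthpoly_monic_size k : orthpoly k \is monic /\ size (orthpoly k) = k.+1.
Proof.
elim/ltn_ind: k => -[|[|k]] IH; first by rewrite orthpoly0 monic1 size_poly1.
  by rewrite orthpoly1 monicX size_polyX.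
have [[_ sz_k] [mon_k1 sz_k1]] := (IH k (ltnW (ltnSn _)), IH k.+1 (ltnSn _)).
have sz_X : size ('X * orthpoly k.+1) = k.+3.
  by rewrite mulrC size_mulX ?sz_k1 // -size_poly_eq0 sz_k1.
have lt_sz : (size (- ((c k.+1)%:P * orthpoly k))%R < size ('X * orthpoly k.+1)%R)%N.
  by rewrite size_polyN mul_polyC sz_X (leq_ltn_trans (size_scale_leq _ _)) ?sz_k.
rewrite (orthpolySS k) size_polyDl // sz_X; split=> //.
by rewrite monicE lead_coefDl // mulrC lead_coefMX.
Qed.

Lemma orthpoly_monic k : orthpoly k \is monic.
Proof. by case: (orthpoly_monic_size k). Qed.

Lemma size_orthpoly k : size (orthpoly k) = k.+1.
Proof. by case: (orthpoly_monic_size k). Qed.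

Lemma orthpolyN k x : (orthpoly k).[- x] = (-1) ^+ k * (orthpoly k).[x].
Proof.
elim/ltn_ind: k => -[|[|k]] IH.
- by rewrite orthpoly0 !hornerC expr0 mul1r.
- by rewrite orthpoly1 !hornerX expr1 mulN1r.
by rewrite !horner_orthpolySS !IH // !exprS; ring.
Qed.

End OrthPoly.

Lemma incr_chain d (T : porderType d) (s : nat -> T) k :
  (forall i, (i < k)%N -> (s i < s i.+1)%O) ->
  forall i j, (i < j <= k)%N -> (s i < s j)%O.
Proof.
move=> s_lt i j /andP[]; elim: j => // j IH.
rewrite ltnS leq_eqVlt => /orP[/eqP-> | lt_ij] lt_jk; first exact: s_lt.
exact: lt_trans (IH lt_ij (ltnW lt_jk)) (s_lt j lt_jk).
Qed.

Lemma uniq_mkseq_incr d (T : porderType d) (s : nat -> T) k :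
  (forall i j, (i < j < k)%N -> (s i < s j)%O) -> uniq (mkseq s k).
Proof.
move=> s_incr; apply/mkseq_uniqP => i j; rewrite !inE => ik jk eq_s.
case: (ltngtP i j) => // [ij | ji].
  by have := s_incr i j; rewrite ij jk eq_s ltxx => /(_ isT).
by have := s_incr j i; rewrite ji ik eq_s ltxx => /(_ isT).
Qed.

Lemma sgn_horner_prod_XsubC (R : realDomainType) (s : nat -> R) k i z :
  (forall j, (j < i)%N -> s j < z) -> (forall j, (i <= j < k)%N -> z < s j) ->
  0 < (-1) ^+ (k - i) * (\prod_(x <- mkseq s k) ('X - x%:P)).[z].
Proof.
elim: k => [|k IH] lt_z gt_z; first by rewrite big_nil sub0n hornerC mulr1.
have {}IH : 0 < (-1) ^+ (k - i) * (\prod_(x <- mkseq s k) ('X - x%:P)).[z].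
  by apply: IH => // j /andP[ij jk]; apply: gt_z; rewrite ij ltnW.
rewrite mkseqS big_rcons /= hornerM hornerXsubC.
have [le_ik | lt_ki] := leqP i k.
  rewrite subSn // exprS mulN1r mulNr -mulrN -mulrN opprB mulrA mulr_gt0 //.
  by rewrite subr_gt0 gt_z // le_ik ltnSn.
move: IH; rewrite !(eqP (ltnW lt_ki)) (eqP lt_ki) mulrA => IH.
by rewrite mulr_gt0 // subr_gt0 lt_z.
Qed.

Lemma monic_eq_prod_XsubC (R : realFieldType) (p : {poly R}) k (s : nat -> R) :
  p \is monic -> size p = k.+1 ->
  (forall i j, (i < j < k)%N -> s i < s j) -> (forall i, (i < k)%N -> root p (s i)) ->
  p = \prod_(x <- mkseq s k) ('X - x%:P).
Proof.
move=> p_monic p_size s_incr s_root.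
have s_roots : all (root p) (mkseq s k).
  by apply/allP => x /mapP[i]; rewrite mem_iota => /andP[_ ik] ->; exact: s_root.
rewrite [LHS](@all_roots_prod_XsubC _ _ (mkseq s k)) ?size_mkseq ?uniq_rootsE //.
  by rewrite (monicP p_monic) scale1r.
exact: uniq_mkseq_incr.
Qed.

Lemma alternating_roots (R : rcfType) (p : {poly R}) K (z : nat -> R) :
  (forall j, (j < K)%N -> z j <= z j.+1) ->
  (forall j, (j <= K)%N -> 0 < (-1) ^+ (K - j) * p.[z j]) ->
  exists s : nat -> R,
    forall j, (j < K)%N -> [/\ z j < s j, s j < z j.+1 & root p (s j)].
Proof.
move=> z_le z_sgn.
have root_between j : exists x, (j < K)%N ==> [&& z j < x, x < z j.+1 & root p x].
  have [jK | ] := ltnP j K; last by exists 0.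
  have sgn_change : p.[z j] * p.[z j.+1] < 0.
    have := mulr_gt0 (z_sgn j (ltnW jK)) (z_sgn j.+1 jK).
    rewrite -(subnSK jK) exprS mulN1r !mulNr oppr_gt0.
    by rewrite mulrACA -expr2 sqrr_sign mul1r.
  have [x] := poly_ivtoo (z_le j jK) sgn_change.
  by rewrite in_itv /= => /andP[lo hi] px; exists x; apply/and3P.
exists (fun j => xchoose (root_between j)) => j jK.
by have /implyP/(_ jK)/and3P := xchooseP (root_between j).
Qed.

Section Interlacing.
Variables (R : rcfType) (c : nat -> R).
Local Notation P := (orthpoly c).

Lemma orthpoly_sign_at_infty k :
  exists M, forall x, M <= x -> 0 < (P k).[x] /\ 0 < (-1) ^+ k * (P k).[- x].
Proof.
have lc1 := monicP (orthpoly_monic c k).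
have [|M HM] := @poly_pinfty_gt_lc _ (P k); first by rewrite lc1 ltr01.
exists M => x /HM; rewrite lc1 orthpolyN mulrA -expr2 sqrr_sign mul1r => P_ge1.
by split; exact: lt_le_trans ltr01 P_ge1.
Qed.

Definition interlaced_roots k (s : nat -> R) :=
  [/\ forall i j, (i < j <= k)%N -> s i < s j,
      forall i, (i <= k)%N -> root (P k.+1) (s i)
    & forall i, (i <= k)%N -> 0 < (-1) ^+ (k - i) * (P k).[s i]].

Lemma interlaced_roots0 : interlaced_roots 0 (fun=> 0).
Proof.
split=> [i j | i _ | i].
- by rewrite leqn0 => /andP[ij /eqP j0]; rewrite j0 in ij.
- by rewrite orthpoly1 rootX.
- by rewrite leqn0 orthpoly0 hornerC mulr1 => /eqP->; rewrite expr0 ltr01.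
Qed.

Lemma interlaced_rootsS k s :
  0 < c k.+1 -> interlaced_roots k s -> exists t, interlaced_roots k.+1 t.
Proof.
move=> c_pos [s_incr s_root s_sgn].
have s_le i j : (i <= j <= k)%N -> s i <= s j.
  by rewrite leq_eqVlt => /andP[/orP[/eqP-> // | ij] jk]; rewrite ltW ?s_incr ?ij.
have P_eq : P k.+1 = \prod_(x <- mkseq s k.+1) ('X - x%:P).
  by apply: monic_eq_prod_XsubC; rewrite ?orthpoly_monic ?size_orthpoly.
have sgn_at_s i : (i <= k)%N -> 0 < (-1) ^+ (k.+1 - i) * (P k.+2).[s i].
  move=> ik; rewrite horner_orthpolySS_root ?s_root // subSn // exprS.
  by rewrite mulN1r mulrNN mulrCA mulr_gt0 ?s_sgn.
have [M HM] := orthpoly_sign_at_infty k.+2.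
pose U := Num.max M (Num.max (s k) (- s 0%N)).
have M_le_U : M <= U by rewrite le_max lexx.
have sk_le_U : s k <= U by rewrite !le_max lexx !orbT.
have NU_le_s0 : - U <= s 0%N by rewrite lerNl !le_max lexx !orbT.
(* P_(k+2) alternates in sign along -U, s_0, ..., s_k, U. *)
pose z j := if j is j'.+1 then (if (j' <= k)%N then s j' else U) else - U.
have z_le j : (j < k.+2)%N -> z j <= z j.+1.
  case: j => [|j] //=; rewrite !ltnS => jk; rewrite jk.
  case: ltnP => [jk' | kj]; first by rewrite s_le // leqnSn jk'.
  by have -> : j = k by apply/anti_leq; rewrite jk kj.
have z_sgn j : (j <= k.+2)%N -> 0 < (-1) ^+ (k.+2 - j) * (P k.+2).[z j].
  case: j => [|j] /= jk; first by rewrite subn0; case: (HM U M_le_U).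
  case: leqP => [jk' | kj]; first exact: sgn_at_s.
  have -> : j = k.+1 by apply/anti_leq; rewrite kj andbT.
  by rewrite subnn mul1r; case: (HM U M_le_U).
have [t Ht] := alternating_roots z_le z_sgn.
exists t; split.
- apply: incr_chain => i ik; have [_ lt_ti _] := Ht i (ltnW ik).
  by apply: lt_trans lt_ti _; have [] := Ht i.+1 ik.
- by move=> i ik; case: (Ht i ik).
move=> i ik; rewrite P_eq; apply: sgn_horner_prod_XsubC => j.
  case: i ik => [//|i] ik ji; rewrite ltnS in ik; have [/= + _ _] := Ht i.+1 ik.
  by rewrite ik => lt_zt; apply: le_lt_trans lt_zt; rewrite s_le // -ltnS ji.
rewrite ltnS => /andP[ij jk]; have [_ /= + _] := Ht i ik.
by rewrite (leq_trans ij jk) => lt_tz; apply: lt_le_trans lt_tz _; rewrite s_le // ij.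
Qed.

Lemma orthpoly_interlacing k :
  (forall j, (0 < j <= k)%N -> 0 < c j) -> exists s, interlaced_roots k s.
Proof.
elim: k => [|k IH] c_pos; first by exists (fun=> 0); exact: interlaced_roots0.
have [|s s_roots] := IH; first by move=> j /andP[j0 jk]; rewrite c_pos // j0 ltnW.
by apply: interlaced_rootsS s_roots; apply: c_pos; rewrite leqnn.
Qed.

End Interlacing.

Section ZeroDiagonalTridiagonal.
Variables (R : fieldType) (N : nat) (b g : nat -> R).

Definition tridiag0 : 'M[R]_N.+1 :=
  \matrix_(i, j) (if (j : nat) == i.+1 then b i else if (i : nat) == j.+1 then g j else 0).

Lemma mul_row_tridiag0 (f : nat -> R) (j : 'I_N.+1) :
  ((\row_(i < N.+1) f i) *m tridiag0) 0 j =
  (if (j : nat) is j'.+1 then f j' * b j' else 0) + (if (j < N)%N then f j.+1 * g j else 0).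
Proof.
rewrite !mxE (eq_bigr (fun i : 'I_N.+1 =>
  (if (j : nat) == i.+1 then f i * b i else 0) + (if (i : nat) == j.+1 then f i * g j else 0))).
  rewrite big_split -!big_mkcond /= (big_ord1_eq _ (fun i => f i * g j)); congr (_ + _).
  case: (nat_of_ord j) (ltn_ord j) => [|j'] lt_j; first by rewrite big_pred0.
  under eq_bigl do rewrite eqSS eq_sym.
  by rewrite (big_ord1_eq _ (fun i => f i * b i)) ltnW.
move=> i _; rewrite !mxE; case: eqP => [-> | _].
  by rewrite ltn_eqF ?addr0 // leqnSn.
by rewrite add0r; case: eqP; rewrite ?mulr0.
Qed.

Lemma eigenvalue_tridiag0 (c : nat -> R) a :
  (forall i, (i < N)%N -> g i != 0) -> (forall i, (i < N)%N -> c i.+1 = b i * g i) ->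
  root (orthpoly c N.+1) a -> eigenvalue tridiag0 a.
Proof.
move=> g_neq0 c_bg Pa.
pose w j := \prod_(i < j) (g i)^-1.
pose v j := w j * (orthpoly c j).[a].
have w_g j : (j < N)%N -> w j.+1 * g j = w j.
  by move=> jN; rewrite /w big_ord_recr /= -mulrA mulVf ?mulr1 ?g_neq0.
(* In the last row the missing neighbour term vanishes because [a] is a root. *)
have next_v j : (j <= N)%N ->
    (if (j < N)%N then v j.+1 * g j else 0) = w j * (orthpoly c j.+1).[a].
  rewrite leq_eqVlt => /orP[/eqP-> | jN]; first by rewrite ltnn (rootP Pa) mulr0.
  by rewrite jN /v mulrAC w_g.
apply/eigenvalueP; exists (\row_(j < N.+1) v j); last first.
  apply/negP => /eqP/rowP/(_ ord0); rewrite !mxE /v /w big_ord0 orthpoly0 hornerC mulr1.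
  by move/eqP; rewrite oner_eq0.
apply/rowP => j; rewrite mul_row_tridiag0 !mxE (next_v j (ltn_ord j)).
case: (nat_of_ord j) (ltn_ord j) => [|j'] lt_j.
  by rewrite add0r /v /w !big_ord0 orthpoly0 orthpoly1 hornerC hornerX !mul1r mulr1.
by rewrite /v -(w_g j') // horner_orthpolySS c_bg //; ring.
Qed.

End ZeroDiagonalTridiagonal.

Section GeneralizedBinomial.
Variable R : numFieldType.

Definition gbinom (y : R) (l : nat) : R := (l`!%:R)^-1 * \prod_(j < l) (y - j%:R).

Lemma gbinom0 y : gbinom y 0 = 1.
Proof. by rewrite /gbinom big_ord0 fact0 invr1 mulr1. Qed.

Lemma gbinom1 y : gbinom y 1 = y.
Proof. by rewrite /gbinom big_ord1 factS fact0 muln1 invr1 mul1r subr0. Qed.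

Lemma gbinomS y l : l.+1%:R * gbinom y l.+1 = (y - l%:R) * gbinom y l.
Proof.
rewrite /gbinom big_ord_recr /= factS natrM invfM -!mulrA mulVKf ?pnatr_eq0 //.
by rewrite mulrA mulrC.
Qed.

End GeneralizedBinomial.

Lemma horner_pbinom (R : realType) (p : {poly R}) l z : (pbinom p l).[z] = gbinom p.[z] l.
Proof.
rewrite /pbinom /gbinom hornerZ horner_prod; congr (_ * _).
by apply: eq_bigr => j _; rewrite hornerD hornerN hornerC.
Qed.

Section KrawtchoukRecurrence.
Variables (R : realType) (m : nat) (x : R).

Let u l := (-1) ^+ l * gbinom x l.
Let v j := gbinom (m%:R - x) j.
Let K k := \sum_(l < k.+1) u l * v (k - l).
Let S k := \sum_(l < k.+1) l%:R * u l * v (k - l).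

Let horner_krawtchouk k : (krawtchouk R m k).[x] = K k.
Proof.
rewrite /krawtchouk horner_sum; apply: eq_bigr => l _.
by rewrite hornerZ hornerM !horner_pbinom hornerX hornerD hornerN hornerC hornerX mulrA.
Qed.

Let uS l : l.+1%:R * u l.+1 = (l%:R - x) * u l.
Proof. by rewrite /u mulrCA gbinomS exprS; ring. Qed.

Let vS j : j.+1%:R * v j.+1 = (m%:R - x - j%:R) * v j.
Proof. exact: gbinomS. Qed.

Let S_rec k : S k.+1 = S k - x * K k.
Proof.
rewrite /S big_ord_recl /= !mul0r add0r /K mulr_sumr -sumrB.
by apply: eq_bigr => l _; rewrite /bump /= add1n subSS uS; ring.
Qed.

Let K_rec k : k.+1%:R * K k.+1 = (m%:R - 2 * x - k%:R) * K k + 2 * S k.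
Proof.
have split_weight : k.+1%:R * K k.+1 = S k.+1 +
    \sum_(l < k.+2) (k.+1 - l)%:R * u l * v (k.+1 - l).
  rewrite /K /S mulr_sumr -big_split /=; apply: eq_bigr => l _.
  by rewrite -!mulrDl -natrD subnKC ?mulrA // -ltnS ltn_ord.
rewrite split_weight S_rec big_ord_recr /= subnn mul0r mul0r addr0 /K /S.
rewrite !mulr_sumr -!sumrB -!big_split /=; apply: eq_bigr => l _.
have le_lk : (l <= k)%N by rewrite -ltnS.
by rewrite subSn // (mulrAC (k - l).+1%:R) vS natrB //; ring.
Qed.

Lemma krawtchouk0 : (krawtchouk R m 0).[x] = 1.
Proof. by rewrite horner_krawtchouk /K big_ord1 /u /v !gbinom0 expr0 !mulr1. Qed.

Lemma krawtchouk1 : (krawtchouk R m 1).[x] = m%:R - 2 * x.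
Proof.
rewrite horner_krawtchouk /K big_ord_recr big_ord1 /u /v /= !gbinom0 !gbinom1.
by rewrite expr0 expr1; ring.
Qed.

Lemma krawtchoukSS k :
  k.+2%:R * (krawtchouk R m k.+2).[x] =
  (m%:R - 2 * x) * (krawtchouk R m k.+1).[x] - (m%:R - k%:R) * (krawtchouk R m k).[x].
Proof.
rewrite !horner_krawtchouk K_rec S_rec.
have twoS : 2 * S k = k.+1%:R * K k.+1 - (m%:R - 2 * x - k%:R) * K k by rewrite K_rec; ring.
by rewrite mulrDr twoS -addn1 natrD; ring.
Qed.

End KrawtchoukRecurrence.

Definition krawtchouk_coef (R : nzRingType) (m j : nat) : R := j%:R * (m%:R - j%:R + 1).

Lemma krawtchouk_coef_gt0 (R : realDomainType) m j :
  (0 < j <= m)%N -> 0 < krawtchouk_coef R m j.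
Proof.
move=> /andP[j0 jm]; rewrite mulr_gt0 ?ltr0n //.
have : (j%:R <= m%:R :> R) by rewrite ler_nat.
lra.
Qed.

Lemma orthpoly_krawtchouk (R : realType) m (x : R) k :
  (orthpoly (krawtchouk_coef R m) k).[2 * x - m%:R] =
  k`!%:R * (-1) ^+ k * (krawtchouk R m k).[x].
Proof.
elim/ltn_ind: k => -[|[|k]] IH.
- by rewrite orthpoly0 hornerC krawtchouk0 fact0 expr0 !mulr1.
- by rewrite orthpoly1 hornerX krawtchouk1 factS fact0 expr1; ring.
rewrite horner_orthpolySS !IH // [k.+2`!]factS natrM.
transitivity (k.+1`!%:R * (-1) ^+ k * (k.+2%:R * (krawtchouk R m k.+2).[x])).
  by rewrite krawtchoukSS /krawtchouk_coef factS natrM !exprS !mulrSr; ring.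
by rewrite !exprS; ring.
Qed.

Lemma root_orthpoly_krawtchouk (R : realType) m (x : R) k :
  root (orthpoly (krawtchouk_coef R m) k) (2 * x - m%:R) = root (krawtchouk R m k) x.
Proof.
by rewrite /root orthpoly_krawtchouk !mulf_eq0 pnatr_eq0 eqn0Ngt fact_gt0 signr_eq0.
Qed.

Lemma kgamma_kbeta (R : realType) n t i : (t + i + t < n)%N ->
  kgamma R n t (t + i) != 0 /\
  krawtchouk_coef R (n - t.*2) i.+1 = kbeta R n (t + i).+1 * kgamma R n t (t + i).
Proof.
move=> lt_n; have [i_ge0 t_ge0] : 0 <= i%:R :> R /\ 0 <= t%:R :> R by rewrite !ler0n.
have lt_nR : (t%:R + i%:R + t%:R < n%:R :> R) by rewrite -!natrD ltr_nat.
have [num1 num2 den] : [/\ 0 < t%:R + i%:R - t%:R + 1 :> R,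
  0 < n%:R - t%:R - (t%:R + i%:R) :> R & 0 < n%:R - (t%:R + i%:R) :> R] by split; lra.
rewrite /kgamma /kbeta /krawtchouk_coef natrB -?mul2n ?natrM ?mulrSr ?natrD; last lia.
split; first by rewrite lt0r_neq0 // divr_gt0 ?mulr_gt0.
by field; rewrite lt0r_neq0.
Qed.

Lemma Ay_eigenvalue (R : realType) n r t a : (t <= r)%N -> (r.*2 <= n)%N ->
  root (orthpoly (krawtchouk_coef R (n - t.*2)) (r - t).+1) a -> eigenvalue (Ay R n r t) a.
Proof.
move=> le_tr le_rn.
(* [Ay R n r t] is convertible to [tridiag0] with these off-diagonals. *)
apply: (@eigenvalue_tridiag0 _ _ (fun i => kbeta R n (t + i).+1)
  (fun j => kgamma R n t (t + j))) => i lt_i.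
all: by have [] // := @kgamma_kbeta R n t i; rewrite -addnn in le_rn; lia.
Qed.

Theorem lemma2p5 (R : realType) (n r t : nat) :
  (t <= r)%N -> (r.*2 <= n)%N ->
  [/\ (exists s : seq R,
         [/\ uniq s, size s = (r - t).+1 &
             forall a, eigenvalue (Ay R n r t) a <-> a \in s]),
      (forall a, eigenvalue (Ay R n r t) a -> mup a (char_poly (Ay R n r t)) = 1%N)
    & (forall a, eigenvalue (Ay R n r t) a <->
         exists x, root (krawtchouk R (n - t.*2) (r - t).+1) x /\
                   a = 2 * x - (n - t.*2)%:R)].
Proof.
move=> le_tr le_rn; set N := (r - t)%N; set m := (n - t.*2)%N.
have [|s [s_incr s_root _]] := @orthpoly_interlacing R (krawtchouk_coef R m) N.
  by move=> j /andP[j0 jN]; apply: krawtchouk_coef_gt0; rewrite j0 /=; lia.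
have s_uniq := uniq_mkseq_incr (k := N.+1) s_incr.
have P_eq := monic_eq_prod_XsubC (k := N.+1) (orthpoly_monic _ _) (size_orthpoly _ _)
  s_incr s_root.
have char_eq : char_poly (Ay R n r t) = orthpoly (krawtchouk_coef R m) N.+1.
  rewrite P_eq; apply: (monic_eq_prod_XsubC (k := N.+1) (char_poly_monic _)
    (size_char_poly _) s_incr) => i iN.
  by rewrite -eigenvalue_root_char Ay_eigenvalue ?s_root.
have eigE a : eigenvalue (Ay R n r t) a = (a \in mkseq s N.+1).
  by rewrite eigenvalue_root_char char_eq P_eq root_prod_XsubC.
split.
- by exists (mkseq s N.+1); rewrite size_mkseq; split=> // a; rewrite eigE.
- by move=> a; rewrite eigE char_eq P_eq mu_prod_XsubC count_uniq_mem // => ->.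
move=> a; rewrite eigenvalue_root_char char_eq; split=> [Pa | [x [Kx ->]]].
  exists ((a + m%:R) / 2); rewrite -root_orthpoly_krawtchouk.
  by have -> : 2 * ((a + m%:R) / 2) - m%:R = a by field.
by rewrite root_orthpoly_krawtchouk.
Qed.
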